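(* Let $s$ be a positive integer, let $\lambda,\eta,n$ be numbers, put $c(x)=\lambda x+\eta$, and let $h_{s,i,j}$ be as in the context. Then $$\sum_{i=0}^{s-1}c(n-i)^s\sum_{j'=i+1}^{s}h_{s,i,j'}+\sum_{i=s+1}^{2s}(-1)^s c(n-i)^s\sum_{j'=0}^{i-s-1}h_{s,2s-i,s-j'}=\Big[\frac1s\binom{2s}{s-1}-1\Big]\lambda^s(s+1)!.$$
   Context: For a fixed positive integer $s$, the numbers $h_{s,i,j}$ (integers $i\ge 0$, $j$) are defined recursively by: $h_{s,i,j}=0$ if $j\le i$; for $i=0$ and $j\ge 1$, $h_{s,0,j}=\binom{s+j-1}{j}\frac{s-j}{s}$; for $i>0$ and $j>i$, $h_{s,i,j}=-\frac{s-j+1}{i}h_{s,i-1,j-1}-\frac{j-i}{i}h_{s,i-1,j}$. *)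

From mathcomp Require Import all_boot all_order all_algebra.
Set Implicit Arguments. Unset Strict Implicit. Unset Printing Implicit Defensive.
Import Order.TTheory GRing.Theory Num.Theory.
Local Open Scope ring_scope.

Fixpoint h (R : numFieldType) (s i j : nat) : R :=
  match i with
  | 0%N => if (j <= 0)%N then 0
           else 'C(s + j - 1, j)%:R * ((s%:R - j%:R) / s%:R)
  | i'.+1 =>
      if (j <= i'.+1)%N then 0
      else - ((s%:R - j%:R + 1) / i'.+1%:R) * h R s i' j.-1
           - ((j%:R - i'.+1%:R) / i'.+1%:R) * h R s i' j
  end.

From mathcomp Require Import all_boot all_order all_algebra.
From mathcomp Require Import ring zify.
Set Implicit Arguments. Unset Strict Implicit. Unset Printing Implicit Defensive.
Import Order.TTheory GRing.Theory Num.Theory.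

(* The row sums [H_i = sum_j h_{s,i,j}] obey [(i+1) H_{i+1} = (i+1-s) H_i], so
   [H_i = (-1)^i C(s-1,i) H_0], and [H_0 = C(2s,s-1)/s - 1] by the hockey-stick
   identity.  Reversing the inner sum of the second term and shifting its index,
   the left-hand side becomes [H_0 (G(c(n)) - G(c(n) - (s+1) lambda))], where
   [G(b) = sum_i (-1)^i C(s-1,i) (b - lambda i)^s].  Now [G(b) - G(b - lambda)] is
   an s-th finite difference of a polynomial of degree s, hence equals
   [lambda^s s!]; telescoping over s+1 steps gives [lambda^s (s+1)!]. *)

Lemma sum_bin_diag m N : \sum_(0 <= j < N.+1) 'C(m + j, j) = 'C(m + N.+1, N).
Proof.
elim: N => [|N IH]; first by rewrite big_nat1 !bin0.
by rewrite big_nat_recr //= IH !addnS (binS (m + N).+1 N) addnC.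
Qed.

Lemma sum_bin_diag_weighted m N :
  \sum_(0 <= j < N.+2) 'C(m + j, j) * (N.+1 - j) = 'C(m + N.+2, N).
Proof.
elim: N => [|N IH].
  by rewrite big_nat_recr //= big_nat1 subnn muln0 addn0 bin0 muln1 bin0.
rewrite big_nat_recr //= subnn muln0 addn0.
rewrite (eq_big_nat _ _ (F2 := fun j => 'C(m + j, j) * (N.+1 - j) + 'C(m + j, j)));
  last by move=> j /andP [_ ltjN]; rewrite subSn // mulnSr.
rewrite big_split /= IH sum_bin_diag.
by rewrite !addnS (binS (m + N).+2 N) addnC.
Qed.

Local Open Scope ring_scope.

Section FiniteDifference.

Variable R : comPzRingType.
Implicit Types (f g : nat -> R) (a b : R).

(* [(-1)^k] times the k-th forward difference of [f] at 0. *)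
Definition fdiff k f : R := \sum_(0 <= i < k.+1) (-1) ^+ i * 'C(k, i)%:R * f i.

Lemma eq_fdiff k f g : f =1 g -> fdiff k f = fdiff k g.
Proof. by move=> fg; apply: eq_bigr => i _; rewrite fg. Qed.

Lemma fdiffS k f : fdiff k.+1 f = fdiff k (fun i => f i - f i.+1).
Proof.
rewrite /fdiff big_nat_recl //= expr0 bin0 !mul1r.
under eq_bigr do rewrite binS natrD exprS mulrDr !mulrDl.
rewrite big_split /=.
under [RHS]eq_bigr do rewrite mulrBr.
rewrite big_split /= addrA; congr (_ + _).
  rewrite big_nat_recr //= bin_small // mulr0 mul0r addr0.
  rewrite [RHS]big_nat_recl //= expr0 bin0 !mul1r; congr (_ + _).
  by apply: eq_bigr => i _; rewrite -exprS.
by apply: eq_bigr => i _; rewrite mulN1r !mulNr.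
Qed.

Lemma fdiff_sum (I : Type) (r : seq I) (F : I -> nat -> R) (c : I -> R) k :
  fdiff k (fun i => \sum_(t <- r) c t * F t i) = \sum_(t <- r) c t * fdiff k (F t).
Proof.
rewrite /fdiff; under eq_bigr do rewrite mulr_sumr.
rewrite exchange_big /=; apply: eq_bigr => t _.
by rewrite mulr_sumr; apply: eq_bigr => i _; rewrite mulrCA.
Qed.

Lemma fdiffS_pow k j :
  fdiff k.+1 (fun i => i%:R ^+ j)
  = - \sum_(0 <= t < j) 'C(j, t)%:R * fdiff k (fun i => i%:R ^+ t).
Proof.
rewrite fdiffS.
have diff_pow i : i%:R ^+ j - i.+1%:R ^+ j
                  = \sum_(0 <= t < j) - 'C(j, t)%:R * i%:R ^+ t :> R.
  rewrite -nat1r exprDn big_ord_recr /= subnn expr1n mul1r binn mulr1n.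
  rewrite opprD addrCA subrr addr0 big_mkord -sumrN.
  by apply: eq_bigr => t _; rewrite expr1n mul1r mulNr mulr_natl.
rewrite (eq_fdiff _ diff_pow) fdiff_sum -sumrN.
by apply: eq_bigr => t _; rewrite mulNr.
Qed.

Lemma fdiff_pow_lt k r : (r < k)%N -> fdiff k (fun i => i%:R ^+ r) = 0.
Proof.
elim: k r => [//|k IH] r ltrk; rewrite fdiffS_pow big1_seq ?oppr0 // => t.
rewrite mem_index_iota => /andP [_ lttr].
by rewrite IH ?mulr0 //; apply: leq_trans lttr ltrk.
Qed.

Lemma fdiff_pow k : fdiff k (fun i => i%:R ^+ k) = (-1) ^+ k * k`!%:R.
Proof.
elim: k => [|k IH]; first by rewrite /fdiff big_nat1 !expr0 bin0 !mul1r.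
rewrite fdiffS_pow big_nat_recr //= big1_seq ?add0r; last first.
  by move=> t; rewrite mem_index_iota => /andP [_ lttk]; rewrite fdiff_pow_lt ?mulr0.
by rewrite IH binSn factS natrM exprS; ring.
Qed.

Lemma fdiff_affine_pow a b k :
  fdiff k (fun i => (b - a * i%:R) ^+ k) = a ^+ k * k`!%:R.
Proof.
have expand i : (b - a * i%:R) ^+ k
    = \sum_(0 <= r < k.+1) ('C(k, r)%:R * b ^+ (k - r) * (- a) ^+ r) * i%:R ^+ r.
  rewrite -mulNr exprDn big_mkord; apply: eq_bigr => r _.
  by rewrite exprMn -mulr_natl; ring.
rewrite (eq_fdiff _ expand) fdiff_sum big_nat_recr //= big1_seq ?add0r; last first.
  by move=> r; rewrite mem_index_iota => /andP [_ ltrk]; rewrite fdiff_pow_lt ?mulr0.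
rewrite fdiff_pow subnn binn expr0 !mul1r.
by rewrite mulrA -exprMn mulrNN mulr1.
Qed.

Lemma fdiff_affine_pow_step a b k :
  fdiff k (fun i => (b - a * i%:R) ^+ k.+1)
  - fdiff k (fun i => (b - a - a * i%:R) ^+ k.+1) = a ^+ k.+1 * k.+1`!%:R.
Proof.
rewrite -(fdiff_affine_pow a b) fdiffS /fdiff -sumrB.
by apply: eq_bigr => i _; rewrite mulrBr -nat1r mulrDr mulr1 opprD addrA.
Qed.

Lemma fdiff_affine_pow_shift a b k m :
  fdiff k (fun i => (b - a * i%:R) ^+ k.+1)
  - fdiff k (fun i => (b - m%:R * a - a * i%:R) ^+ k.+1)
  = m%:R * (a ^+ k.+1 * k.+1`!%:R).
Proof.
elim: m => [|m IH]; first by rewrite mul0r subr0 subrr mul0r.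
rewrite -[m.+1%:R]nat1r [in RHS]mulrDl [in RHS]mul1r -IH.
rewrite -(fdiff_affine_pow_step a (b - m%:R * a)).
have -> : fdiff k (fun i => (b - (1 + m%:R) * a - a * i%:R) ^+ k.+1)
        = fdiff k (fun i => (b - m%:R * a - a - a * i%:R) ^+ k.+1).
  by apply: eq_fdiff => i; congr (_ ^+ _); ring.
ring.
Qed.

End FiniteDifference.

Section RowSums.

Variable R : numFieldType.

Lemma h_small s i j : (j <= i)%N -> h R s i j = 0.
Proof. by case: i => [|i] /= ->. Qed.

Lemma h_succ s i j :
  h R s i.+1 j = - ((s%:R - j%:R + 1) / i.+1%:R) * h R s i j.-1
                 - ((j%:R - i.+1%:R) / i.+1%:R) * h R s i j.
Proof.
rewrite /=; case: leqP => // ltij.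
rewrite (@h_small s i j.-1); last by case: j ltij.
case: (ltngtP j i.+1) ltij => // [ltji _|-> _].
  by rewrite h_small // !mulr0 subrr.
by rewrite subrr !mul0r mulr0 subrr.
Qed.

Definition hsum s i : R := \sum_(0 <= j < s.+1) h R s i j.

Lemma hsum_succ s i : i.+1%:R * hsum s i.+1 = (i.+1%:R - s%:R) * hsum s i.
Proof.
have scaled j : i.+1%:R * h R s i.+1 j
    = - (s%:R - j%:R + 1) * h R s i j.-1 - (j%:R - i.+1%:R) * h R s i j.
  by rewrite h_succ; field; rewrite nat1r pnatr_eq0.
rewrite /hsum mulr_sumr (eq_bigr _ (fun j _ => scaled j)) big_split /= !sumrN.
rewrite big_nat_recl // h_small // mulr0 add0r.
rewrite [X in _ - X]big_nat_recr //= [in RHS]big_nat_recr //=.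
rewrite mulrDr mulr_sumr opprD addrA -sumrB; congr (_ + _); last by rewrite -mulNr opprB.
by apply: eq_bigr => j _; rewrite -natr1; ring.
Qed.

Lemma hsum_binom k i :
  (i <= k)%N -> hsum k.+1 i = (-1) ^+ i * 'C(k, i)%:R * hsum k.+1 0.
Proof.
elim: i => [|i IH] lt_ik; first by rewrite expr0 bin0 !mul1r.
have binS_scaled : i.+1%:R * 'C(k, i.+1)%:R = (k%:R - i%:R) * 'C(k, i)%:R :> R.
  by rewrite -natrM mul_bin_left natrM natrB // ltnW.
apply: (@mulfI _ i.+1%:R); first by rewrite pnatr_eq0.
rewrite hsum_succ IH; last exact: ltnW.
transitivity (- (-1) ^+ i * (i.+1%:R * 'C(k, i.+1)%:R) * hsum k.+1 0); last first.
  by rewrite exprS; ring.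
by rewrite binS_scaled -[i.+1%:R]natr1 -[k.+1%:R]natr1; ring.
Qed.

Lemma hsum0 k : hsum k.+1 0 = k.+1%:R^-1 * 'C(2 * k.+1, k)%:R - 1.
Proof.
have h0E j : (0 <= j < k.+2)%N ->
    h R k.+1 0 j = ('C(k + j, j) * (k.+1 - j))%:R / k.+1%:R - (j == 0%N)%:R.
  case/andP=> _; case: j => [|j] le_jk /=.
    by rewrite addn0 bin0 subn0 mul1n divff ?pnatr_eq0 // subrr.
  by rewrite addSn subn1 natrM natrB // subr0 mulrA.
rewrite /hsum (eq_big_nat _ _ h0E) sumrB -mulr_suml -natr_sum.
rewrite sum_bin_diag_weighted big_nat_recl // big1 // addr0.
by rewrite mulrC (_ : (2 * k.+1 = k + k.+2)%N) //; lia.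
Qed.

Lemma hsum_tail s i :
  (i <= s)%N -> \sum_(i.+1 <= j < s.+1) h R s i j = hsum s i.
Proof.
move=> le_is; rewrite /hsum [RHS](big_cat_nat _ (n := i.+1)) //.
rewrite [X in _ = X + _]big1_seq ?add0r // => j.
by rewrite mem_index_iota => /andP [_ ltji]; rewrite h_small.
Qed.

Lemma hsum_rev k t m :
  (t + m = k)%N -> \sum_(0 <= j < m.+1) h R k.+1 t (k.+1 - j) = hsum k.+1 t.
Proof.
move=> tmk; rewrite /hsum [RHS]big_nat_rev /=.
under [RHS]eq_bigr do rewrite subSS.
rewrite [RHS](big_cat_nat _ (n := m.+1)) //=; last by lia.
rewrite [X in _ + X]big1_seq ?addr0 // => j.
by rewrite mem_index_iota => /andP [_ ltj]; apply: h_small; lia.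
Qed.

Lemma head_sum_fdiff k (a b : R) :
  \sum_(0 <= i < k.+1) (b - a * i%:R) ^+ k.+1 * \sum_(i.+1 <= j < k.+2) h R k.+1 i j
  = hsum k.+1 0 * fdiff k (fun i => (b - a * i%:R) ^+ k.+1).
Proof.
rewrite /fdiff mulr_sumr; apply: eq_big_nat => i /andP [_ lt_ik].
rewrite hsum_tail; last exact: ltnW.
by rewrite hsum_binom; [ring | exact: lt_ik].
Qed.

Lemma tail_sum_fdiff k (a b : R) :
  \sum_(k.+2 <= i < (2 * k.+1).+1)
     (-1) ^+ k.+1 * (b - a * i%:R) ^+ k.+1
     * \sum_(0 <= j < i - k.+1) h R k.+1 (2 * k.+1 - i) (k.+1 - j)
  = - (hsum k.+1 0 * fdiff k (fun i => (b - k.+2%:R * a - a * i%:R) ^+ k.+1)).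
Proof.
rewrite (big_addn 0 _ k.+2) (_ : ((2 * k.+1).+1 - k.+2 = k.+1)%N); last by lia.
rewrite /fdiff mulr_sumr -sumrN; apply: eq_big_nat => i /andP [_ lt_ik].
rewrite (_ : (i + k.+2 - k.+1 = i.+1)%N); last by lia.
rewrite (_ : (2 * k.+1 - (i + k.+2) = k - i)%N); last by lia.
rewrite (@hsum_rev k (k - i) i); last by lia.
rewrite hsum_binom ?leq_subr // bin_sub //.
have -> : b - a * (i + k.+2)%:R = b - k.+2%:R * a - a * i%:R by rewrite natrD; ring.
have sign : (-1) ^+ k.+1 * (-1) ^+ (k - i) = - (-1) ^+ i :> R.
  rewrite -[X in (-1) ^+ X * _](subnK lt_ik) exprD subSS.
  by rewrite mulrAC -mulrA signrMK exprS mulN1r.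
transitivity ((-1) ^+ k.+1 * (-1) ^+ (k - i) * 'C(k, i)%:R * hsum k.+1 0
              * (b - k.+2%:R * a - a * i%:R) ^+ k.+1); first by ring.
by rewrite sign; ring.
Qed.

End RowSums.

Theorem proposition12 (R : numFieldType) (s : nat) (hs : (0 < s)%N)
    (lambda eta n : R) :
  let c := fun x : R => lambda * x + eta in
  \sum_(0 <= i < s) c (n - i%:R) ^+ s * \sum_(i.+1 <= j < s.+1) h R s i j
  + \sum_(s.+1 <= i < (2 * s).+1)
      (-1) ^+ s * c (n - i%:R) ^+ s * \sum_(0 <= j < i - s) h R s (2 * s - i) (s - j)
  = ((s%:R)^-1 * 'C(2 * s, s - 1)%:R - 1) * lambda ^+ s * (s.+1)`!%:R.
Proof.
case: s hs => [//|k] _ c.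
have cE x : c (n - x) = c n - lambda * x by rewrite /c; ring.
under eq_bigr do rewrite cE.
rewrite head_sum_fdiff.
under eq_bigr do rewrite cE.
rewrite tail_sum_fdiff -mulrBr fdiff_affine_pow_shift hsum0 subn1 /=.
rewrite [(k.+2)`!]factS natrM.
ring.
Qed.
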